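(* Let $\mathcal{A}=\mathbb{C}\langle x,y,z\rangle/(x^2,y^2,z^2,xyz,yzx,zxy)$, graded by $\deg x=\deg y=\deg z=1$, and let $a_n=\dim\mathcal{A}_n$. Then $a_n=2a_{n-1}-a_{n-3}$ for all $n\ge 4$. *)

From HB Require Import structures.
From mathcomp Require Import all_boot all_order all_algebra all_field.
Set Implicit Arguments. Unset Strict Implicit. Unset Printing Implicit Defensive.
Import GRing.Theory Num.Theory.
Local Open Scope ring_scope.

(* Generators x, y, z of the free algebra C<x,y,z> are encoded as
   0, 1, 2 : 'I_3.  Monomials of degree n are words n.-tuple 'I_3. *)
Definition gx : 'I_3 := inord 0.
Definition gy : 'I_3 := inord 1.
Definition gz : 'I_3 := inord 2.

Definition rels : seq (seq 'I_3) :=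
  [:: [:: gx; gx]; [:: gy; gy]; [:: gz; gz];
      [:: gx; gy; gz]; [:: gy; gz; gx]; [:: gz; gx; gy]].

(* Degree-n component of the free algebra C<x,y,z>: C-valued functions on
   words of length n (coordinates w.r.t. the monomial basis). *)
Notation freeDeg n := {ffun n.-tuple 'I_3 -> algC^o}.

Definition mono n (w : n.-tuple 'I_3) : freeDeg n :=
  [ffun w' => (w' == w)%:R].

(* Degree-n component of the two-sided ideal generated by the relations:
   spanned by the products u * r * v with u, v monomials and r a relation,
   |u| + |r| + |v| = n, i.e. by the monomials w = u ++ r ++ v. *)
Definition idealDeg (n : nat) : {vspace freeDeg n} :=
  <<[seq mono w | w <- enum [pred w : n.-tuple 'I_3 | has (fun r => infix r (val w)) rels]]>>%VS.

(* a_n = dim A_n = dim (free_n / ideal_n). *)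
Definition a (n : nat) : nat := (\dim (fullv : {vspace freeDeg n}) - \dim (idealDeg n))%N.

(* Reading x, y, z as 0, 1, -1 in Z/3, the relations are monomials, so A_n has
   a basis of words avoiding them.  Such a word repeats no letter, hence moves
   by +1 or -1 at each step, and the cubic relations are exactly the windows
   with two consecutive +1 steps.  Counting step sequences without two
   consecutive +1 gives a_n = 3 F_(n+1) for n >= 1, and the Fibonacci
   recurrence turns this into a_n = 2 a_(n-1) - a_(n-3). *)

From mathcomp Require Import all_boot all_order all_algebra all_field.
From mathcomp Require Import zify.
Set Implicit Arguments. Unset Strict Implicit. Unset Printing Implicit Defensive.
Import GRing.Theory.

Section Deltas.
Variables (K : fieldType) (T : finType).
Local Open Scope ring_scope.

Definition delta (s : T) : {ffun T -> K^o} := [ffun t => (t == s)%:R].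

Lemma span_delta_vanish (S : seq T) (s : T) (v : {ffun T -> K^o}) :
  s \notin S -> v \in <<map delta S>>%VS -> v s = 0.
Proof.
move=> sNS /(coord_span (X := in_tuple _)) ->; rewrite sum_ffunE big1 // => i _.
have iS : (i < size S)%N by rewrite -(size_map delta) ltn_ord.
rewrite ffunE (nth_map s) // ffunE.
have /negPf -> : s != nth s S i by apply: contraNneq sNS => ->; rewrite mem_nth.
by rewrite scaler0.
Qed.

Lemma free_delta (S : seq T) : uniq S -> free (map delta S).
Proof.
elim: S => [_|s S IH /= /andP[sNS uS]]; first by rewrite /free span_nil dimv0.
rewrite free_cons IH // andbT; apply: contra (oner_neq0 K) => /(span_delta_vanish sNS).
by rewrite ffunE eqxx => /eqP.
Qed.

End Deltas.

Definition reducible (w : seq 'I_3) : bool := has (fun r => infix r w) rels.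

Lemma a_card_irreducible n : a n = #|[pred w : n.-tuple 'I_3 | ~~ reducible w]|.
Proof.
have free_ideal := free_delta algC (enum_uniq [pred w : n.-tuple 'I_3 | reducible w]).
rewrite /a /idealDeg (eqP free_ideal) size_map -cardE dimvf.
have := cardC [pred w : n.-tuple 'I_3 | reducible w]; rewrite /dim /= muln1 => <-.
by rewrite addKn; apply: eq_card => w; rewrite !inE.
Qed.

Section Words.
Variable T : finType.

Fixpoint words n : seq (seq T) :=
  if n is m.+1 then [seq e :: w | e <- enum T, w <- words m] else [:: [::]].

Lemma mem_words n w : (w \in words n) = (size w == n).
Proof.
elim: n w => [|n IH] [|e w] //=.
  by apply/negbTE/allpairsP => -[[? ?] [_ _]].
apply/allpairsP/idP => [[[e' w'] /= [_ w'n [_ ->]]]|wn].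
  by rewrite eqSS -IH.
by exists (e, w); rewrite mem_enum IH -(eqSS (size w)).
Qed.

Lemma words_uniq n : uniq (words n).
Proof.
elim: n => //= n IH; rewrite allpairs_uniq ?enum_uniq //.
by move=> [e w] [e' w'] _ _ /= [-> ->].
Qed.

Lemma count_words_succ (P : pred (seq T)) n :
  count P (words n.+1) = \sum_(e : T) count (fun w => P (e :: w)) (words n).
Proof.
rewrite -big_enum /=; elim: (enum T) => [|e s IH]; first by rewrite big_nil.
by rewrite big_cons /= count_cat count_map IH.
Qed.

Lemma card_tuple_count (P : pred (seq T)) n :
  #|[pred w : n.-tuple T | P w]| = count P (words n).
Proof.
have ->: #|[pred w : n.-tuple T | P w]| = count P (map val (enum {: n.-tuple T})).
  by rewrite count_map enumT cardE /enum_mem size_filter; apply: eq_count => w; rewrite inE.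
apply/permP: P; apply: uniq_perm; rewrite ?words_uniq ?(map_inj_uniq val_inj) ?enum_uniq //.
move=> w; rewrite mem_words; apply/mapP/idP => [[t _ ->]|wn]; first by rewrite size_tuple.
by exists (Tuple wn); rewrite ?mem_enum.
Qed.

End Words.

Lemma sum_I3_around (d : 'I_3) (F : 'I_3 -> nat) :
  \sum_(e : 'I_3) F e = F d + F (d + 1)%R + F (d - 1)%R.
Proof.
have enum_d : perm_eq (enum 'I_3) [:: d; (d + 1)%R; (d - 1)%R].
  case: d => [[|[|[|//]]] ?]; apply: uniq_perm; rewrite ?enum_uniq // => e;
    by rewrite mem_enum; case: e => [[|[|[|//]]] ?].
by rewrite -big_enum (perm_big _ enum_d) !big_cons big_nil /= addn0 addnA.
Qed.

Lemma I3_addr1 (c : 'I_3) : (c + 1 == c)%R = false.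
Proof. by case: c => [[|[|[|//]]] ?]. Qed.

Lemma I3_subr1 (c : 'I_3) : (c - 1 == c)%R = false.
Proof. by case: c => [[|[|[|//]]] ?]. Qed.

Lemma I3_subr1_addr1 (c : 'I_3) : (c - 1 == c + 1)%R = false.
Proof. by case: c => [[|[|[|//]]] ?]. Qed.

Lemma generatorsE : [/\ gx = 0, gy = 1 & gz = -1]%R.
Proof. by split; apply: val_inj; rewrite /= inordK. Qed.

Definition forbidden (c d e : 'I_3) : bool :=
  (d == c) || (d == c + 1)%R && (e == d + 1)%R.

Lemma reducible_pair c d : reducible [:: c; d] = (d == c).
Proof.
rewrite /reducible /rels; case: generatorsE => -> -> -> /=.
by case: c d => [[|[|[|//]]] ?] [[|[|[|//]]] ?].
Qed.

Lemma reducible_cons3 c d e w :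
  reducible [:: c, d, e & w] = forbidden c d e || reducible [:: d, e & w].
Proof.
transitivity (has (fun r => prefix r [:: c, d, e & w]) rels || reducible [:: d, e & w]).
  by rewrite /reducible -has_predU; apply: eq_has.
congr (_ || _); rewrite /rels; case: generatorsE => -> -> -> /=; rewrite !prefix0s.
by case: c d e => [[|[|[|//]]] ?] [[|[|[|//]]] ?] [[|[|[|//]]] ?].
Qed.

Lemma forbidden_up c e : forbidden c (c + 1)%R e = (e == c + 1 + 1)%R.
Proof. by case: c e => [[|[|[|//]]] ?] [[|[|[|//]]] ?]. Qed.

Lemma forbidden_down c e : forbidden c (c - 1)%R e = false.
Proof. by case: c e => [[|[|[|//]]] ?] [[|[|[|//]]] ?]. Qed.

Definition extensions n (c d : 'I_3) : nat :=
  count (fun w => ~~ reducible [:: c, d & w]) (words 'I_3 n).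

Lemma extensions_diag n c : extensions n c c = 0.
Proof.
rewrite /extensions (eq_count (a2 := pred0)) ?count_pred0 // => w /=.
apply/negbF/hasP; exists [:: c; c]; last by rewrite /= !eqxx prefix0s.
by rewrite /rels; case: generatorsE => -> -> ->; case: c => [[|[|[|//]]] ?].
Qed.

Lemma extensions_succ n c d :
  extensions n.+1 c d = \sum_(e : 'I_3) ~~ forbidden c d e * extensions n d e.
Proof.
rewrite /extensions count_words_succ; apply: eq_bigr => e _.
under eq_count => w do rewrite reducible_cons3 negb_or.
by case: (forbidden c d e); rewrite ?count_pred0 //= mul1n.
Qed.

Fixpoint fib n : nat :=
  if n is m.+1 then (if m is k.+1 then fib m + fib k else 1) else 0.

Lemma fibSS n : fib n.+2 = fib n.+1 + fib n. Proof. by []. Qed.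

Lemma extensions_up_down n c :
  extensions n c (c + 1)%R = fib n.+1 /\ extensions n c (c - 1)%R = fib n.+2.
Proof.
elim: n c => [|n IH] c; first by rewrite /extensions /= !reducible_pair I3_addr1 I3_subr1.
split; rewrite extensions_succ.
  rewrite (sum_I3_around (c + 1)%R) !forbidden_up eqxx I3_subr1_addr1.
  by rewrite extensions_diag (proj2 (IH _)) muln0 mul0n mul1n.
rewrite (sum_I3_around (c - 1)%R) !forbidden_down extensions_diag.
by rewrite (proj1 (IH _)) (proj2 (IH _)) !mul1n add0n addnC.
Qed.

Lemma count_irreducible n :
  count (fun w => ~~ reducible w) (words 'I_3 n.+1) = 3 * fib n.+2.
Proof.
rewrite count_words_succ; case: n => [|n].
  rewrite (eq_bigr (fun _ => 1)) ?sum_nat_const ?card_ord // => c _.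
  by rewrite /reducible /= !andbF.
rewrite (eq_bigr (fun _ => fib n.+3)) ?sum_nat_const ?card_ord // => c _.
rewrite count_words_succ (sum_I3_around c).
change (extensions n c c + extensions n c (c + 1)%R + extensions n c (c - 1)%R = fib n.+3).
by have [-> ->] := extensions_up_down n c; rewrite extensions_diag add0n addnC.
Qed.

Lemma a_fib n : a n.+1 = 3 * fib n.+2.
Proof.
rewrite a_card_irreducible -count_irreducible.
exact: (card_tuple_count (fun w => ~~ reducible w)).
Qed.

Local Open Scope ring_scope.

Theorem mainTheorem20 (n : nat) (hn : (4 <= n)%N) :
  (a n)%:Z = 2%:Z * (a n.-1)%:Z - (a (n - 3)%N)%:Z.
Proof.
case: n hn => [|[|[|[|k]]]] // _.
rewrite /= !subSS subn0 !a_fib !fibSS.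
lia.
Qed.
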